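(* Let $\ell\ge 0$ be an integer. Each of the following two $2\times(2\ell+3)$ matrices, listed column by column, is a $(2,2\ell+3,1)$-tropical code within maximum delay $\ell$: (1) the columns $(0,\infty),(0,\ell),(0,\ell-1),\dots,(0,1),(0,0),(1,0),(2,0),\dots,(\ell,0),(\infty,0)$; (2) the columns $(0,\infty)$, then $(i,\ell-i)$ for $i=0,\dots,\ell$ interleaved with $(i,\ell-i+1)$ for $i=1,\dots,\ell$ in the order $(0,\ell),(1,\ell),(1,\ell-1),(2,\ell-1),\dots,(\ell-1,1),(\ell,1),(\ell,0)$, and finally $(\infty,0)$. (Each pair $(u,v)$ denotes the column with first entry $u$ and second entry $v$.)
   Context: Tropical arithmetic on $\mathbb{R}\cup\{\infty\}$: $x\oplus y=\min(x,y)$, $x\odot y=x+y$, with $x\oplus\infty=x$ and $x\odot\infty=\infty$. For a matrix $S$ with $T$ rows and $N$ columns and a column vector $\mathbf{x}$ of length $N$, $S\odot\mathbf{x}$ is the vector whose $t$-th entry is $\min_{j}(S_{tj}+x_j)$. A $(T,N,D)$-tropical code is a matrix $S\in(\{0\}\cup\mathbb{N}\cup\{\infty\})^{T\times N}$ such that for any two distinct vectors $\mathbf{x},\mathbf{y}\in(\{0\}\cup\mathbb{N}\cup\{\infty\})^{N}$, each having at most $D$ finite entries, $S\odot\mathbf{x}\ne S\odot\mathbf{y}$. It is within maximum delay $\ell$ if $S\in\{0,1,\dots,\ell,\infty\}^{T\times N}$. *)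

From mathcomp Require Import all_boot all_algebra.
Set Implicit Arguments. Unset Strict Implicit. Unset Printing Implicit Defensive.

(* Tropical semiring on {0} ∪ N ∪ {∞}: [Some n] = n, [None] = ∞. *)
Definition tval := option nat.

Definition tmul (a b : tval) : tval :=
  match a, b with Some m, Some n => Some (m + n) | _, _ => None end.

Definition tadd (a b : tval) : tval :=
  match a, b with
  | None, y => y
  | x, None => x
  | Some m, Some n => Some (minn m n)
  end.

Definition tmatvec T N (S : 'M[tval]_(T, N)) (x : 'cV[tval]_N) : 'cV[tval]_T :=
  \col_(t < T) \big[tadd/None]_(j < N) tmul (S t j) (x j ord0).

Definition nfinite N (x : 'cV[tval]_N) : nat := #|[set j : 'I_N | x j ord0 != None]|.

Definition tropical_code T N (D : nat) (S : 'M[tval]_(T, N)) : Prop :=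
  forall x y : 'cV[tval]_N,
    nfinite x <= D -> nfinite y <= D -> x <> y -> tmatvec S x <> tmatvec S y.

Definition within_delay T N (l : nat) (S : 'M[tval]_(T, N)) : Prop :=
  forall i j, S i j = None \/ exists k, k <= l /\ S i j = Some k.

Definition col1 (l j : nat) : tval * tval :=
  if j == 0 then (Some 0, None)
  else if j <= l.+1 then (Some 0, Some (l.+1 - j))
  else if j <= 2 * l + 1 then (Some (j - l.+1), Some 0)
  else (None, Some 0).

(* column j (0-indexed) of code (2); for k = j-1 in 0..2l:
   k = 2i gives (i, l-i), k = 2i-1 gives (i, l-i+1) *)
Definition col2 (l j : nat) : tval * tval :=
  if j == 0 then (Some 0, None)
  else if j <= 2 * l + 1 then
    let k := j.-1 in
    if odd k then (Some k./2.+1, Some (l - k./2))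
    else (Some k./2, Some (l - k./2))
  else (None, Some 0).

Definition mx_of_cols (l : nat) (c : nat -> nat -> tval * tval) : 'M[tval]_(2, 2 * l + 3) :=
  \matrix_(i < 2, j < 2 * l + 3) (if val i == 0 then (c l (val j)).1 else (c l (val j)).2).

Definition code1 l := mx_of_cols l col1.
Definition code2 l := mx_of_cols l col2.

From Pilot Require Import Defs.
From HB Require Import structures.
From mathcomp Require Import all_boot all_algebra zify.
Set Implicit Arguments. Unset Strict Implicit. Unset Printing Implicit Defensive.

(* Both codes are instances of one family.  A vector with at most one finite
   entry is either the all-infinite vector or a tropical unit vector a*e_j,
   and S multiplies the latter to column j of S shifted by a.  Hence a
   matrix is a (T,N,1)-tropical code as soon as every column has a finite
   entry and distinct pairs (column, shift) give distinct shifted columns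
   ([shifted_columns_code]).  For two rows this holds for a "staircase": the
   extreme columns are (0,inf) and (inf,0) and every middle column j is a
   finite pair (u,v) with v + (j-1) = u + l, so that the difference v - u
   strictly decreases with j and identifies j, after which the shift is
   determined too ([staircase_code]).  Both matrices of the theorem are
   staircases ([col1_staircase], [col2_staircase]). *)

Lemma taddA : associative tadd.
Proof. by case=> [a|] [b|] [c|] //=; rewrite minnA. Qed.

Lemma taddC : commutative tadd.
Proof. by case=> [a|] [b|] //=; rewrite minnC. Qed.

Lemma tadd0 : left_id None tadd.
Proof. by case. Qed.

HB.instance Definition _ := Monoid.isComLaw.Build Defs.tval None tadd taddA taddC tadd0.

Lemma tmul_finite_eqNone (x : Defs.tval) (a : nat) : (tmul x (Some a) == None) = (x == None).
Proof. by case: x. Qed.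

Lemma tmul_shift_eq (x y : Defs.tval) (a b : nat) : tmul x (Some a) = tmul y (Some b) ->
  match x, y with
  | Some u, Some v => u + a = v + b
  | None, None => True
  | _, _ => False
  end.
Proof. by case: x => [u|]; case: y => [v|] //= [->]. Qed.

Definition tunit N (j : 'I_N) (a : nat) : 'cV[Defs.tval]_N :=
  \col_(k < N) (if k == j then Some a else None).

Lemma nfinite_le1 N (x : 'cV[Defs.tval]_N) :
  nfinite x <= 1 -> x = const_mx None \/ exists j a, x = tunit j a.
Proof.
move=> /card_le1_eqP x_le1.
case: (pickP [pred j | x j ord0 != None]) => [j /= xj | x_inf]; last first.
  left; apply/matrixP => k i; rewrite (ord1 i) mxE.
  by move/negbFE/eqP: (x_inf k).
case E: (x j ord0) xj => [a|] // _; right; exists j, a.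
apply/matrixP => k i; rewrite (ord1 i) mxE.
case: eqP => [-> //|k_neq_j]; apply/eqP; apply: contraT => xk.
by case: k_neq_j; apply: x_le1; rewrite inE ?E.
Qed.

Lemma tmatvec_inf T N (S : 'M[Defs.tval]_(T, N)) : tmatvec S (const_mx None) = const_mx None.
Proof.
apply/matrixP => t i; rewrite !mxE big1 // => k _.
by rewrite mxE; case: (S t k).
Qed.

Lemma tmatvec_tunit T N (S : 'M[Defs.tval]_(T, N)) j a :
  tmatvec S (tunit j a) = (\col_(t < T) tmul (S t j) (Some a))%R.
Proof.
apply/matrixP => t i; rewrite !mxE (bigD1 j) //= big1 => [|k k_neq_j].
  by rewrite mxE eqxx; case: tmul.
by rewrite mxE (negbTE k_neq_j); case: (S t k).
Qed.

Lemma shifted_columns_code T N (S : 'M[Defs.tval]_(T, N)) :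
  (forall j, exists t, S t j != None) ->
  (forall j j' a a', (forall t, tmul (S t j) (Some a) = tmul (S t j') (Some a')) ->
     j = j' /\ a = a') ->
  tropical_code 1 S.
Proof.
move=> col_finite shift_inj x y /nfinite_le1 x1 /nfinite_le1 y1 x_neq_y.
have unit_neq_inf j a : tmatvec S (tunit j a) <> tmatvec S (const_mx None).
  rewrite tmatvec_inf tmatvec_tunit => /matrixP E.
  have [t St] := col_finite j; move: (E t ord0); rewrite !mxE => /eqP.
  by rewrite tmul_finite_eqNone (negbTE St).
case: x1 y1 x_neq_y => [->|[j [a ->]]] [->|[j' [a' ->]]] x_neq_y.
- by case: x_neq_y.
- by move=> /esym; apply: unit_neq_inf.
- exact: unit_neq_inf.
rewrite !tmatvec_tunit => /matrixP E.
have [j_eq a_eq] : j = j' /\ a = a'.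
  by apply: shift_inj => t; move: (E t ord0); rewrite !mxE.
by apply: x_neq_y; rewrite j_eq a_eq.
Qed.

Definition staircase (l : nat) (c : nat -> nat -> Defs.tval * Defs.tval) : Prop :=
  [/\ c l 0 = (Some 0, None), c l (2 * l + 2) = (None, Some 0) &
      forall j, 0 < j <= 2 * l + 1 ->
        exists u v, [/\ c l j = (Some u, Some v), v + j.-1 = u + l, u <= l & v <= l]].

Section Staircase.

Variables (l : nat) (c : nat -> nat -> Defs.tval * Defs.tval).
Hypothesis stair : staircase l c.

Lemma staircase_column (j : 'I_(2 * l + 3)) :
  [\/ val j = 0 /\ c l (val j) = (Some 0, None),
      val j = 2 * l + 2 /\ c l (val j) = (None, Some 0) |
      0 < val j /\ exists u v, [/\ c l (val j) = (Some u, Some v),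
                                  v + (val j).-1 = u + l, u <= l & v <= l]].
Proof.
have [c0 cN cmid] := stair.
have [j0|j_pos] := posnP (val j); first by constructor 1; rewrite j0.
have [jN|j_nmax] := eqVneq (val j) (2 * l + 2); first by constructor 2; rewrite jN.
have j_lt : val j < 2 * l + 3 := ltn_ord j.
by constructor 3; split=> //; apply: cmid; lia.
Qed.

Lemma staircase_within_delay : within_delay l (mx_of_cols l c).
Proof.
move=> i j; rewrite mxE.
case: (staircase_column j) => [[_ ->]|[_ ->]|[_ [u [v [-> _ ul vl]]]]];
  case: ifP => _ /=; by [left | right; exists 0 | right; exists u | right; exists v].
Qed.

(* Distinct shifted columns: the difference v - u of a middle column identifies it. *)
Lemma staircase_shift_inj (j j' : 'I_(2 * l + 3)) a a' :
  tmul (c l (val j)).1 (Some a) = tmul (c l (val j')).1 (Some a') ->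
  tmul (c l (val j)).2 (Some a) = tmul (c l (val j')).2 (Some a') -> j = j' /\ a = a'.
Proof.
move=> /tmul_shift_eq + /tmul_shift_eq.
case: (staircase_column j) => [[j0 cj]|[jN cj]|[j_pos [u [v [cj vj _ _]]]]];
case: (staircase_column j') => [[j0' cj']|[jN' cj']|[j'_pos [u' [v' [cj' vj' _ _]]]]];
rewrite cj cj' /= => E1 E2 //.
1, 2: by split; [apply: val_inj|]; lia.
have j_eq : j = j' by apply: val_inj; lia.
by move: cj'; rewrite -j_eq cj => -[u_eq _]; split=> //; lia.
Qed.

Lemma staircase_code : tropical_code 1 (mx_of_cols l c).
Proof.
apply: shifted_columns_code => [j|j j' a a' E].
  case: (staircase_column j) => [[_ cj]|[_ cj]|[_ [u [v [cj _ _ _]]]]].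
  - by exists ord0; rewrite mxE cj.
  - by exists (lift ord0 ord0); rewrite mxE cj.
  - by exists ord0; rewrite mxE cj.
by apply: staircase_shift_inj; [move: (E ord0) | move: (E (lift ord0 ord0))]; rewrite !mxE.
Qed.

End Staircase.

Lemma col1_staircase l : staircase l Defs.col1.
Proof.
rewrite /staircase /Defs.col1; split=> //.
  by rewrite ifF ?ifF ?ifF //; lia.
move=> j j_mid; rewrite ifF; last lia.
case: ifP => j_low; last rewrite ifT; try lia.
- by exists 0, (l.+1 - j); split=> //; lia.
- by exists (j - l.+1), 0; split=> //; lia.
Qed.

Lemma col2_staircase l : staircase l Defs.col2.
Proof.
rewrite /staircase /Defs.col2; split=> //.
  by rewrite ifF ?ifF //; lia.
move=> j j_mid; rewrite ifF; last lia.
rewrite ifT; last lia.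
have := odd_double_half j.-1; rewrite -muln2; case: odd => /= halves.
- by exists (j.-1)./2.+1, (l - (j.-1)./2); split=> //; lia.
- by exists (j.-1)./2, (l - (j.-1)./2); split=> //; lia.
Qed.

Theorem mainTheorem2 (l : nat) :
  (tropical_code 1 (code1 l) /\ within_delay l (code1 l)) /\
  (tropical_code 1 (code2 l) /\ within_delay l (code2 l)).
Proof.
have [stair1 stair2] := (col1_staircase l, col2_staircase l).
split; split.
- exact: staircase_code stair1.
- exact: staircase_within_delay stair1.
- exact: staircase_code stair2.
- exact: staircase_within_delay stair2.
Qed.
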